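(* Let $H$ be a weak Hopf algebra and $A$ a symmetric partial $H$-module algebra. Then the map $\pi\colon H\to\mathrm{End}_\Bbbk(A)$ given by $\pi(h)(a)=h\cdot a$ is a partial representation of $H$ in the algebra $\mathrm{End}_\Bbbk(A)$.
   Context: All algebras are associative and unital over a field $\Bbbk$; Sweedler notation $\Delta(h)=h_1\otimes h_2$, $\Delta(1_H)=1_1\otimes1_2$. A weak Hopf algebra is $(H,m,u,\Delta,\varepsilon,S)$ with $H$ an algebra, $(H,\Delta,\varepsilon)$ a coalgebra, and for all $g,h,k$: $\Delta(kh)=\Delta(k)\Delta(h)$; $\varepsilon(kh_1)\varepsilon(h_2g)=\varepsilon(khg)=\varepsilon(kh_2)\varepsilon(h_1g)$; $(1\otimes\Delta(1))(\Delta(1)\otimes1)=\Delta^2(1)=(\Delta(1)\otimes1)(1\otimes\Delta(1))$; $h_1S(h_2)=\varepsilon(1_1h)1_2$; $S(h_1)h_2=1_1\varepsilon(h1_2)$; $S(h)=S(h_1)h_2S(h_3)$. Symmetric partial $H$-module algebra: algebra $A$ with linear $h\otimes a\mapsto h\cdot a$ such that $h\cdot(ab)=(h_1\cdot a)(h_2\cdot b)$, $1_H\cdot a=a$, $h\cdot(k\cdot a)=(h_1\cdot1_A)((h_2k)\cdot a)$ and $h\cdot(k\cdot a)=((h_1k)\cdot a)(h_2\cdot1_A)$. A partial representation of $H$ in an algebra $B$ is a linear $\pi\colon H\to B$ with, for all $h,k$: (PR1) $\pi(1_H)=1_B$; (PR2) $\pi(h)\pi(k_1)\pi(S(k_2))=\pi(hk_1)\pi(S(k_2))$;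 (PR3) $\pi(h)\pi(S(k_1))\pi(k_2)=\pi(hS(k_1))\pi(k_2)$; (PR4) $\pi(h_1)\pi(S(h_2))\pi(k)=\pi(h_1)\pi(S(h_2)k)$; (PR5) $\pi(S(h_1))\pi(h_2)\pi(k)=\pi(S(h_1))\pi(h_2k)$; (PR6) $\pi(h)=\pi(h_1)\pi(S(h_2))\pi(h_3)$. *)

From HB Require Import structures.
From mathcomp Require Import all_boot all_order all_algebra.
Set Implicit Arguments. Unset Strict Implicit. Unset Printing Implicit Defensive.
Import GRing.Theory.
Local Open Scope ring_scope.

Section WeakHopf.
Variables (k : fieldType) (H : algType k).

(* An element of H (x) H is represented by a finite list of simple tensors
   [(a_i, b_i)], standing for sum_i a_i (x) b_i; similarly for H (x) H (x) H.
   Two such representatives denote the same tensor iff every bilinear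
   (resp. trilinear) form to k takes the same value on them (over a field,
   (H (x) H)^* = Bil(H x H, k) separates points). *)
Definition bilinear_form (f : H -> H -> k) :=
  (forall x, forall a y z, f x (a *: y + z) = a * f x y + f x z) /\
  (forall y, forall a x z, f (a *: x + z) y = a * f x y + f z y).

Definition trilinear_form (f : H -> H -> H -> k) :=
  (forall x y, forall a u v, f x y (a *: u + v) = a * f x y u + f x y v) /\
  (forall x z, forall a u v, f x (a *: u + v) z = a * f x u z + f x v z) /\
  (forall y z, forall a u v, f (a *: u + v) y z = a * f u y z + f v y z).

Definition teq2 (s t : seq (H * H)) : Prop :=
  forall f, bilinear_form f ->
    \sum_(p <- s) f p.1 p.2 = \sum_(p <- t) f p.1 p.2.

Definition teq3 (s t : seq (H * H * H)) : Prop :=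
  forall f, trilinear_form f ->
    \sum_(p <- s) f p.1.1 p.1.2 p.2 = \sum_(p <- t) f p.1.1 p.1.2 p.2.

Variable delta : H -> seq (H * H).

Definition delta3l (h : H) : seq (H * H * H) :=
  flatten [seq [seq (q.1, q.2, p.2) | q <- delta p.1] | p <- delta h].
Definition delta3r (h : H) : seq (H * H * H) :=
  flatten [seq [seq (p.1, q.1, q.2) | q <- delta p.2] | p <- delta h].

Definition is_weak_hopf (eps : H -> k) (S : H -> H) : Prop :=
  (forall a x y, teq2 (delta (a *: x + y))
       ([seq (a *: p.1, p.2) | p <- delta x] ++ delta y)) /\
  (forall a x y, eps (a *: x + y) = a * eps x + eps y) /\
  (forall a x y, S (a *: x + y) = a *: S x + S y) /\
  (forall h, teq3 (delta3l h) (delta3r h)) /\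
  (forall h, \sum_(p <- delta h) eps p.1 *: p.2 = h) /\
  (forall h, \sum_(p <- delta h) eps p.2 *: p.1 = h) /\
  (forall x y, teq2 (delta (x * y))
       [seq (p.1 * q.1, p.2 * q.2) | p <- delta x, q <- delta y]) /\
  (forall x h g, \sum_(p <- delta h) eps (x * p.1) * eps (p.2 * g) = eps (x * h * g)) /\
  (forall x h g, \sum_(p <- delta h) eps (x * p.2) * eps (p.1 * g) = eps (x * h * g)) /\
  (* weak comultiplicativity of the unit:
     (1 (x) Delta(1))(Delta(1) (x) 1) = Delta^2(1) = (Delta(1) (x) 1)(1 (x) Delta(1)) *)
  teq3 [seq (p.1, q.1 * p.2, q.2) | p <- delta 1, q <- delta 1] (delta3l 1) /\
  teq3 (delta3l 1) [seq (p.1, p.2 * q.1, q.2) | p <- delta 1, q <- delta 1] /\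
  (forall h, \sum_(p <- delta h) p.1 * S p.2
             = \sum_(q <- delta 1) eps (q.1 * h) *: q.2) /\
  (forall h, \sum_(p <- delta h) S p.1 * p.2
             = \sum_(q <- delta 1) eps (h * q.2) *: q.1) /\
  (forall h, S h = \sum_(p <- delta3l h) S p.1.1 * p.1.2 * S p.2).

Variable A : algType k.

Definition is_sym_partial_module_algebra (act : H -> A -> A) : Prop :=
  (forall a x y b, act (a *: x + y) b = a *: act x b + act y b) /\
  (forall h a b c, act h (a *: b + c) = a *: act h b + act h c) /\
  (forall h a b, act h (a * b) = \sum_(p <- delta h) act p.1 a * act p.2 b) /\
  (forall a, act 1 a = a) /\
  (forall h g a, act h (act g a) = \sum_(p <- delta h) act p.1 1 * act (p.2 * g) a) /\
  (forall h g a, act h (act g a) = \sum_(p <- delta h) act (p.1 * g) a * act p.2 1).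

(* Elements of End_k(A) are k-linear maps A -> A, product = composition,
   unit = identity; equalities in End_k(A) are checked pointwise. *)
Definition is_partial_rep_End (S : H -> H) (pi : H -> A -> A) : Prop :=
  (forall h a b c, pi h (a *: b + c) = a *: pi h b + pi h c) /\
  (forall a x y b, pi (a *: x + y) b = a *: pi x b + pi y b) /\
  (forall b, pi 1 b = b) /\
  (forall h g b, \sum_(p <- delta g) pi h (pi p.1 (pi (S p.2) b))
               = \sum_(p <- delta g) pi (h * p.1) (pi (S p.2) b)) /\
  (forall h g b, \sum_(p <- delta g) pi h (pi (S p.1) (pi p.2 b))
               = \sum_(p <- delta g) pi (h * S p.1) (pi p.2 b)) /\
  (forall h g b, \sum_(p <- delta h) pi p.1 (pi (S p.2) (pi g b))
               = \sum_(p <- delta h) pi p.1 (pi (S p.2 * g) b)) /\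
  (forall h g b, \sum_(p <- delta h) pi (S p.1) (pi p.2 (pi g b))
               = \sum_(p <- delta h) pi (S p.1) (pi (p.2 * g) b)) /\
  (forall h b, pi h b = \sum_(p <- delta3l h) pi p.1.1 (pi (S p.1.2) (pi p.2 b))).

End WeakHopf.

(* Elements of H (x) H are lists of simple tensors, compared through bilinear
   forms.  Over a field a nonzero vector is detected by a linear functional
   (Zorn's lemma), so every such tensor identity transfers to an identity of
   Sweedler sums under any multilinear map into any vector space.  With eps_t x = x1 S(x2) and eps_s x = S(x1) x2, the weak
   Hopf axioms give x1 (x) eps_t(x2) = 1_1 x (x) 1_2, eps_s(x1) (x) x2 =
   1_1 (x) x 1_2, Delta(eps_s x) = 1_1 (x) 1_2 eps_s(x) and the
   anti-comultiplicativity Delta(S x) = 1_1 S(x2) (x) 1_2 S(x1).  For the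
   symmetric partial action they yield h1.(S(h2).a) = (h.1) a and
   eps_s(h).(g.a) = (eps_s(h) g).a, from which (PR2)-(PR6) are computed. *)
From HB Require Import structures.
From mathcomp Require Import all_boot all_order all_algebra.
From mathcomp Require Import boolp classical_sets.
Set Implicit Arguments. Unset Strict Implicit. Unset Printing Implicit Defensive.
Import GRing.Theory.
Local Open Scope ring_scope.

Section LinearFun.
Variables (k : fieldType) (U : lmodType k) (V : zmodType).
Variables (s : GRing.Scale.law k V) (f : U -> V).
Hypothesis f_lin : linear_for s f.

Lemma linear_funD x y : f (x + y) = f x + f y.
Proof. exact: (GRing.semilinear_linear f_lin).2. Qed.

Lemma linear_funZ a x : f (a *: x) = s a (f x).
Proof. exact: scalable_linear. Qed.

Lemma linear_fun_sum I (r : seq I) (F : I -> U) :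
  f (\sum_(i <- r) F i) = \sum_(i <- r) f (F i).
Proof.
apply: (big_morph f linear_funD).
by rewrite -[0 in LHS](subrr 0) (zmod_morphism_linear f_lin) subrr.
Qed.
End LinearFun.

Section LinearFunctional.
Variables (k : fieldType) (V : lmodType k).

Lemma complement_of_line (d : V) : d != 0 ->
  exists W : set V, [/\ W 0, forall x y, W x -> W y -> W (x + y),
    forall c x, W x -> W (c *: x), ~ W d &
    forall x, exists c w, W w /\ x = w + c *: d].
Proof.
move=> dn0.
pose P (W : set V) := [/\ forall x y, W x -> W y -> W (x + y),
  forall c x, W x -> W (c *: x) & ~ W d].
have [W [[WD WZ Wd] Wmax]] : exists W, P W /\ forall B, (W `<` B)%classic -> ~ P B.
  apply: Zorn_bigcup => F FP Ftot; split.
  - move=> x y [X FX Xx] [Y FY Yy].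
    have [XY|YX] := Ftot X Y FX FY.
    + by exists Y => //; case: (FP Y FY) => + _ _; apply => //; exact: XY.
    + by exists X => //; case: (FP X FX) => + _ _; apply => //; exact: YX.
  - by move=> c x [X FX Xx]; exists X => //; case: (FP X FX) => _ + _; apply.
  - by move=> [X FX Xd]; case: (FP X FX) => _ _; apply.
(* [W] may be empty (Zorn starts from the empty chain), so [0] is added by hand. *)
pose Q w := W w \/ w = 0.
have QD x y : Q x -> Q y -> Q (x + y).
  by case=> [Wx|->] [Wy|->]; rewrite ?addr0 ?add0r; [left; apply: WD|left|left|right].
have QZ c x : Q x -> Q (c *: x).
  by case=> [Wx|->]; [left; apply: WZ|right; rewrite scaler0].
have Qd : ~ Q d by case=> // /eqP; rewrite (negbTE dn0).
exists Q; split => //; first by right.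
move=> x; apply: contrapT => x_out.
pose B y := exists c w, Q w /\ y = w + c *: x.
apply: (Wmax B); first split.
- by move=> y Wy; exists 0, y; split; [left|rewrite scale0r addr0].
- move=> BW; apply: x_out; exists 0, x; split; last by rewrite scale0r addr0.
  by left; apply: BW; exists 1, 0; split; [right|rewrite add0r scale1r].
split.
- move=> _ _ [c [w [Qw ->]]] [c' [w' [Qw' ->]]].
  by exists (c + c'), (w + w'); split; [exact: QD|rewrite scalerDl addrACA].
- move=> a _ [c [w [Qw ->]]].
  by exists (a * c), (a *: w); split; [exact: QZ|rewrite scalerDr scalerA].
- move=> [c [w [Qw dE]]]; have [c0|cn0] := eqVneq c 0.
    by apply: Qd; rewrite dE c0 scale0r addr0.
  apply: x_out; exists c^-1, ((- c^-1) *: w); split; first exact: QZ.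
  by rewrite dE scalerDr scalerA mulVf // scale1r scaleNr addrA addNr add0r.
Qed.

Lemma linear_functional_one (d : V) : d != 0 ->
  exists phi : V -> k, scalar phi /\ phi d = 1.
Proof.
move=> dn0; have [W [W0 WD WZ Wd Wspan]] := complement_of_line dn0.
have coord_uniq c c' w w' : W w -> W w' -> w + c *: d = w' + c' *: d -> c = c'.
  move=> Ww Ww' E; apply/eqP; rewrite -subr_eq0; apply/negP => /negP cn0.
  apply: Wd; suff -> : d = (c - c')^-1 *: (w' + (-1) *: w).
    by apply: (WZ); apply: WD => //; apply: WZ.
  apply: (@scalerI _ _ (c - c')) => //; rewrite scalerA mulfV // scale1r.
  rewrite scalerBl scaleN1r; apply/eqP; rewrite subr_eq.
  by apply/eqP; rewrite addrAC -E addrAC subrr add0r.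
pose phi x := projT1 (cid (Wspan x)).
have phiP x : exists w, W w /\ x = w + phi x *: d by rewrite /phi; case: cid.
exists phi; split.
- move=> a x y; have [w [Ww xE]] := phiP x; have [w' [Ww' yE]] := phiP y.
  have [w'' [Ww'' E]] := phiP (a *: x + y).
  apply: (coord_uniq _ _ w'' (a *: w + w')) => //; first by apply: WD => //; apply: WZ.
  by rewrite -E {1}xE {1}yE scalerDl scalerDr scalerA addrACA.
- have [w [Ww E]] := phiP d.
  by apply: esym; apply: (coord_uniq _ _ 0 w) => //; rewrite -E add0r scale1r.
Qed.

Lemma linear_functionals_separate (u v : V) :
  (forall phi : V -> k, scalar phi -> phi u = phi v) -> u = v.
Proof.
move=> eq_phi; apply/eqP; rewrite -subr_eq0; apply/negPn/negP => /linear_functional_one.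
case=> phi [phi_lin phi1]; have /eqP := phi1.
by rewrite (zmod_morphism_linear phi_lin) eq_phi // subrr eq_sym oner_eq0.
Qed.
End LinearFunctional.

Section MultilinearMaps.
Variables (k : fieldType) (H : algType k) (V : lmodType k).

Definition bilinear_map (F : H -> H -> V) :=
  (forall x, linear (F x)) /\ (forall y, linear (F^~ y)).

Definition trilinear_map (G : H -> H -> H -> V) :=
  (forall x, bilinear_map (G x)) /\ (forall y z, linear (fun x => G x y z)).

Definition quadrilinear_map (G : H -> H -> H -> H -> V) :=
  (forall x, trilinear_map (G x)) /\ (forall y z w, linear (fun x => G x y z w)).

Lemma teq2_sum (F : H -> H -> V) s t : teq2 s t -> bilinear_map F ->
  \sum_(p <- s) F p.1 p.2 = \sum_(p <- t) F p.1 p.2.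
Proof.
move=> st [F2 F1]; apply: linear_functionals_separate => phi phi_lin.
rewrite !(linear_fun_sum phi_lin); apply: (st (fun x y => phi (F x y))).
by split=> [x a y z|y a x z]; rewrite ?F2 ?F1 phi_lin.
Qed.

Lemma teq3_sum (G : H -> H -> H -> V) s t : teq3 s t -> trilinear_map G ->
  \sum_(p <- s) G p.1.1 p.1.2 p.2 = \sum_(p <- t) G p.1.1 p.1.2 p.2.
Proof.
move=> st [G23 G1]; apply: linear_functionals_separate => phi phi_lin.
rewrite !(linear_fun_sum phi_lin); apply: (st (fun x y z => phi (G x y z))).
split; [move=> x y a u v|split=> [x z a u v|y z a u v]] => /=.
- by rewrite (proj1 (G23 x) y) phi_lin.
- by rewrite (proj2 (G23 x) z) phi_lin.
- by rewrite G1 phi_lin.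
Qed.
End MultilinearMaps.

Section BilinearMapFacts.
Variables (k : fieldType) (H : algType k) (V : lmodType k) (F : H -> H -> V).
Hypothesis Fb : bilinear_map F.

Lemma bilinear_mapZl a x y : F (a *: x) y = a *: F x y.
Proof. exact: linear_funZ (proj2 Fb y) a x. Qed.

Lemma bilinear_mapZr a x y : F x (a *: y) = a *: F x y.
Proof. exact: linear_funZ (proj1 Fb x) a y. Qed.

Lemma bilinear_map_suml I (r : seq I) (g : I -> H) y :
  F (\sum_(i <- r) g i) y = \sum_(i <- r) F (g i) y.
Proof. exact: (linear_fun_sum (proj2 Fb y)). Qed.

Lemma bilinear_map_sumr I (r : seq I) (g : I -> H) x :
  F x (\sum_(i <- r) g i) = \sum_(i <- r) F x (g i).
Proof. exact: (linear_fun_sum (proj1 Fb x)). Qed.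
End BilinearMapFacts.

Notation bilinear_rules Fb :=
  (fun x => linear_funD (proj1 Fb x), fun x => linear_funZ (proj1 Fb x),
   fun y => linear_funD (proj2 Fb y), fun y => linear_funZ (proj2 Fb y)).
Notation quadrilinear_rules Gq :=
  (fun x y z => linear_funD (proj1 (proj1 (proj1 Gq x) y) z),
   fun x y z => linear_funZ (proj1 (proj1 (proj1 Gq x) y) z),
   fun x y w => linear_funD (proj2 (proj1 (proj1 Gq x) y) w),
   fun x y w => linear_funZ (proj2 (proj1 (proj1 Gq x) y) w),
   fun x z w => linear_funD (proj2 (proj1 Gq x) z w),
   fun x z w => linear_funZ (proj2 (proj1 Gq x) z w),
   fun y z w => linear_funD (proj2 Gq y z w),
   fun y z w => linear_funZ (proj2 Gq y z w)).

Lemma scalerAC (k : fieldType) (V : lmodType k) (a b : k) (v : V) :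
  b *: (a *: v) = a *: (b *: v).
Proof. by rewrite !scalerA mulrC. Qed.

Section WeakHopfAlgebra.
Variables (k : fieldType) (H : algType k).
Variables (delta : H -> seq (H * H)) (eps : H -> k) (S : H -> H).
Hypothesis HW : is_weak_hopf delta eps S.

Let delta_lin a x y :
  teq2 (delta (a *: x + y)) ([seq (a *: p.1, p.2) | p <- delta x] ++ delta y).
Proof. by case: HW. Qed.
Let eps_lin : scalar eps.
Proof. by case: HW => _ [? _]. Qed.
Let S_lin : linear S.
Proof. by case: HW => _ [_ [? _]]. Qed.
Let coassoc h : teq3 (delta3l delta h) (delta3r delta h).
Proof. by case: HW => _ [_ [_ [? _]]]. Qed.
Lemma counit_l h : \sum_(p <- delta h) eps p.1 *: p.2 = h.
Proof. by case: HW => _ [_ [_ [_ [? _]]]]. Qed.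
Lemma counit_r h : \sum_(p <- delta h) eps p.2 *: p.1 = h.
Proof. by case: HW => _ [_ [_ [_ [_ [? _]]]]]. Qed.
Let delta_mul x y :
  teq2 (delta (x * y)) [seq (p.1 * q.1, p.2 * q.2) | p <- delta x, q <- delta y].
Proof. by case: HW => _ [_ [_ [_ [_ [_ [? _]]]]]]. Qed.
Let delta2_1l :
  teq3 [seq (p.1, q.1 * p.2, q.2) | p <- delta 1, q <- delta 1] (delta3l delta 1).
Proof. by case: HW => _ [_ [_ [_ [_ [_ [_ [_ [_ [? _]]]]]]]]]. Qed.
Let delta2_1r :
  teq3 (delta3l delta 1) [seq (p.1, p.2 * q.1, q.2) | p <- delta 1, q <- delta 1].
Proof. by case: HW => _ [_ [_ [_ [_ [_ [_ [_ [_ [_ [? _]]]]]]]]]]. Qed.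
Lemma antipode_l h :
  \sum_(p <- delta h) p.1 * S p.2 = \sum_(q <- delta 1) eps (q.1 * h) *: q.2.
Proof. by case: HW => _ [_ [_ [_ [_ [_ [_ [_ [_ [_ [_ [? _]]]]]]]]]]]. Qed.
Lemma antipode_r h :
  \sum_(p <- delta h) S p.1 * p.2 = \sum_(q <- delta 1) eps (h * q.2) *: q.1.
Proof. by case: HW => _ [_ [_ [_ [_ [_ [_ [_ [_ [_ [_ [_ [? _]]]]]]]]]]]]. Qed.

Lemma sum_delta3l (V : lmodType k) (G : H -> H -> H -> V) h :
  \sum_(p <- delta3l delta h) G p.1.1 p.1.2 p.2 =
  \sum_(p <- delta h) \sum_(q <- delta p.1) G q.1 q.2 p.2.
Proof. by rewrite big_flatten big_map; apply: eq_bigr => p _; rewrite big_map. Qed.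

Lemma sum_delta3r (V : lmodType k) (G : H -> H -> H -> V) h :
  \sum_(p <- delta3r delta h) G p.1.1 p.1.2 p.2 =
  \sum_(p <- delta h) \sum_(q <- delta p.2) G p.1 q.1 q.2.
Proof. by rewrite big_flatten big_map; apply: eq_bigr => p _; rewrite big_map. Qed.

Lemma antipode_conv h :
  S h = \sum_(p <- delta h) \sum_(q <- delta p.1) S q.1 * q.2 * S p.2.
Proof.
have [_ [_ [_ [_ [_ [_ [_ [_ [_ [_ [_ [_ [_ ->]]]]]]]]]]]]] := HW.
exact: (sum_delta3l (fun x y z => S x * y * S z)).
Qed.

Lemma antipodeD x y : S (x + y) = S x + S y. Proof. exact: linear_funD S_lin x y. Qed.
Lemma antipodeZ a x : S (a *: x) = a *: S x. Proof. exact: linear_funZ S_lin a x. Qed.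
Lemma counitD x y : eps (x + y) = eps x + eps y. Proof. exact: linear_funD eps_lin x y. Qed.
Lemma counitZ a x : eps (a *: x) = a * eps x. Proof. exact: linear_funZ eps_lin a x. Qed.

(* Rewriting cannot reach a summand that mentions the summation index, so sums
   are split and compared termwise. *)
Ltac multilinear_core a r :=
  repeat progress rewrite ?(r, mulrDl, mulrDr, scalerDl, scalerDr,
    antipodeD, antipodeZ, counitD, counitZ) -?scalerAl -?scalerAr -?scalerA /=;
  rewrite ?(scalerAC a);
  first [ done
        | rewrite [in RHS]scaler_sumr -[in RHS]big_split /=;
          apply: eq_bigr => ? _; multilinear_core a r ].

Ltac multilinear r :=
  repeat match goal with
  | |- bilinear_map _ => split
  | |- trilinear_map _ => split
  | |- quadrilinear_map _ => split
  | |- forall _, _ => intro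
  end;
  let a := fresh "a" in move=> a ? ? /=; multilinear_core a r.

Section Sweedler.
Variable V : lmodType k.
Implicit Types (F : H -> H -> V) (G : H -> H -> H -> V).

Definition sweedler x F := \sum_(p <- delta x) F p.1 p.2.

Lemma sweedler_linear F : bilinear_map F -> linear (sweedler^~ F).
Proof.
move=> Fb a x y; rewrite /sweedler (teq2_sum (delta_lin a x y) Fb).
rewrite big_cat big_map /= scaler_sumr; congr (_ + _).
by apply: eq_bigr => p _; rewrite (linear_funZ (proj2 Fb _)).
Qed.

Lemma sweedlerD F x y : bilinear_map F -> sweedler (x + y) F = sweedler x F + sweedler y F.
Proof. by move=> Fb; apply: (linear_funD (sweedler_linear Fb)). Qed.

Lemma sweedlerZ F a x : bilinear_map F -> sweedler (a *: x) F = a *: sweedler x F.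
Proof. by move=> Fb; apply: (linear_funZ (sweedler_linear Fb)). Qed.

Lemma sweedler_sum F I (r : seq I) g : bilinear_map F ->
  sweedler (\sum_(i <- r) g i) F = \sum_(i <- r) sweedler (g i) F.
Proof. by move=> Fb; apply: (linear_fun_sum (sweedler_linear Fb)). Qed.

Lemma coassoc_sum G h : trilinear_map G ->
  \sum_(p <- delta h) \sum_(q <- delta p.1) G q.1 q.2 p.2 =
  \sum_(p <- delta h) \sum_(q <- delta p.2) G p.1 q.1 q.2.
Proof. by move=> Gt; rewrite -sum_delta3l -sum_delta3r (teq3_sum (coassoc h) Gt). Qed.

Lemma sweedler_mul F x y : bilinear_map F ->
  sweedler (x * y) F = \sum_(p <- delta x) \sum_(q <- delta y) F (p.1 * q.1) (p.2 * q.2).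
Proof. by move=> Fb; rewrite /sweedler (teq2_sum (delta_mul x y) Fb) big_allpairs_dep. Qed.

Lemma delta2_unit_l G : trilinear_map G ->
  \sum_(p <- delta 1) \sum_(q <- delta p.1) G q.1 q.2 p.2 =
  \sum_(p <- delta 1) \sum_(q <- delta 1) G p.1 (q.1 * p.2) q.2.
Proof. by move=> Gt; rewrite -sum_delta3l -(teq3_sum delta2_1l Gt) big_allpairs_dep. Qed.

Lemma delta2_unit_r G : trilinear_map G ->
  \sum_(p <- delta 1) \sum_(q <- delta p.1) G q.1 q.2 p.2 =
  \sum_(p <- delta 1) \sum_(q <- delta 1) G p.1 (p.2 * q.1) q.2.
Proof. by move=> Gt; rewrite -sum_delta3l (teq3_sum delta2_1r Gt) big_allpairs_dep. Qed.

Lemma sweedler_mul1r F x : bilinear_map F ->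
  sweedler x F = \sum_(p <- delta x) \sum_(q <- delta 1) F (p.1 * q.1) (p.2 * q.2).
Proof. by move=> Fb; rewrite -{1}[x]mulr1 sweedler_mul. Qed.

End Sweedler.

Definition eps_t x := \sum_(p <- delta x) p.1 * S p.2.
Definition eps_s x := \sum_(p <- delta x) S p.1 * p.2.

Lemma eps_s_linear : linear eps_s.
Proof.
apply: (sweedler_linear (F := fun u v => S u * v)).
by split=> [u|v] a x y /=; rewrite ?antipodeD ?antipodeZ ?mulrDl ?mulrDr -?scalerAl -?scalerAr.
Qed.

Section HopfIdentities.
Variable V : lmodType k.
Implicit Types (F : H -> H -> V).

Lemma coprod_eps_t_r F x : bilinear_map F ->
  \sum_(p <- delta x) \sum_(r <- delta p.2) F p.1 (r.1 * S r.2) =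
  \sum_(u <- delta 1) F (u.1 * x) u.2.
Proof.
move=> Fb.
transitivity (\sum_(p <- delta x) \sum_(v <- delta 1) eps (v.1 * p.2) *: F p.1 v.2).
  apply: eq_bigr => p _; rewrite -bilinear_map_sumr // antipode_l bilinear_map_sumr //.
  by apply: eq_bigr => v _; rewrite bilinear_mapZr.
symmetry.
transitivity (\sum_(u <- delta 1) \sum_(a <- delta u.1) \sum_(q <- delta x)
                 eps (a.2 * q.2) *: F (a.1 * q.1) u.2).
  apply: eq_bigr => u _; rewrite -{1}(counit_r (u.1 * x)) bilinear_map_suml //.
  under eq_bigr do rewrite bilinear_mapZl //.
  rewrite -/(sweedler (u.1 * x) (fun w1 w2 => eps w2 *: F w1 u.2)) sweedler_mul //.
  by multilinear (bilinear_rules Fb).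
rewrite (delta2_unit_l (G := fun y1 y2 y3 =>
    \sum_(q <- delta x) eps (y2 * q.2) *: F (y1 * q.1) y3)); last first.
  by multilinear (bilinear_rules Fb).
rewrite exchange_big /= [RHS]exchange_big /=; apply: eq_bigr => v _.
under eq_bigr do under eq_bigr do rewrite -mulrA.
rewrite -(sweedler_mul (F := fun c e => eps (v.1 * e) *: F c v.2)) ?mul1r //.
by multilinear (bilinear_rules Fb).
Qed.

Lemma coprod_eps_s_l F x : bilinear_map F ->
  \sum_(p <- delta x) \sum_(q <- delta p.1) F (S q.1 * q.2) p.2 =
  \sum_(u <- delta 1) F u.1 (x * u.2).
Proof.
move=> Fb.
transitivity (\sum_(p <- delta x) \sum_(v <- delta 1) eps (p.1 * v.2) *: F v.1 p.2).
  apply: eq_bigr => p _; rewrite -bilinear_map_suml // antipode_r bilinear_map_suml //.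
  by apply: eq_bigr => v _; rewrite bilinear_mapZl.
symmetry.
transitivity (\sum_(u <- delta 1) \sum_(a <- delta u.2) \sum_(q <- delta x)
                 eps (q.1 * a.1) *: F u.1 (q.2 * a.2)).
  apply: eq_bigr => u _; rewrite -{1}(counit_l (x * u.2)) bilinear_map_sumr //.
  under eq_bigr do rewrite bilinear_mapZr //.
  rewrite -/(sweedler (x * u.2) (fun w1 w2 => eps w1 *: F u.1 w2)) sweedler_mul //.
    by rewrite exchange_big.
  by multilinear (bilinear_rules Fb).
rewrite -(coassoc_sum (G := fun y1 y2 y3 =>
    \sum_(q <- delta x) eps (q.1 * y2) *: F y1 (q.2 * y3))); last first.
  by multilinear (bilinear_rules Fb).
rewrite (delta2_unit_l (G := fun y1 y2 y3 =>
    \sum_(q <- delta x) eps (q.1 * y2) *: F y1 (q.2 * y3))) /=; last first.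
  by multilinear (bilinear_rules Fb).
rewrite [RHS]exchange_big /=; apply: eq_bigr => p _.
rewrite exchange_big /=.
under eq_bigr do under eq_bigr do rewrite mulrA.
rewrite -(sweedler_mul1r (F := fun c e => eps (c * p.2) *: F p.1 e)) //.
by multilinear (bilinear_rules Fb).
Qed.

Lemma delta1_eps_s F : bilinear_map F ->
  sweedler 1 F = \sum_(p <- delta 1) F (eps_s p.1) p.2.
Proof.
move=> Fb; under [RHS]eq_bigr do rewrite /eps_s bilinear_map_suml //.
by rewrite coprod_eps_s_l //; apply: eq_bigr => u _; rewrite mul1r.
Qed.

Lemma delta_eps_t F x : bilinear_map F ->
  sweedler (eps_t x) F = \sum_(u <- delta 1) F (u.1 * eps_t x) u.2.
Proof.
move=> Fb; rewrite /eps_t antipode_l sweedler_sum //.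
under eq_bigr do rewrite sweedlerZ // scaler_sumr.
rewrite -(coassoc_sum (G := fun y1 y2 y3 => eps (y1 * x) *: F y2 y3)); last first.
  by multilinear (bilinear_rules Fb).
rewrite (delta2_unit_l (G := fun y1 y2 y3 => eps (y1 * x) *: F y2 y3)) /=; last first.
  by multilinear (bilinear_rules Fb).
rewrite exchange_big /=; apply: eq_bigr => q _.
rewrite mulr_sumr bilinear_map_suml //; apply: eq_bigr => p _.
by rewrite -scalerAr bilinear_mapZl.
Qed.

Lemma delta_eps_s F x : bilinear_map F ->
  sweedler (eps_s x) F = \sum_(u <- delta 1) F u.1 (u.2 * eps_s x).
Proof.
move=> Fb; rewrite /eps_s antipode_r sweedler_sum //.
under eq_bigr do rewrite sweedlerZ // scaler_sumr.
rewrite (delta2_unit_r (G := fun y1 y2 y3 => eps (x * y3) *: F y1 y2)) /=; last first.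
  by multilinear (bilinear_rules Fb).
apply: eq_bigr => p _.
rewrite mulr_sumr bilinear_map_sumr //; apply: eq_bigr => q _.
by rewrite -scalerAr bilinear_mapZr.
Qed.

Lemma delta_mul_eps_s F y z : bilinear_map F ->
  sweedler (y * eps_s z) F = \sum_(a <- delta y) F a.1 (a.2 * eps_s z).
Proof.
move=> Fb; rewrite sweedler_mul //.
transitivity (\sum_(a <- delta y) \sum_(u <- delta 1)
                F (a.1 * u.1) (a.2 * u.2 * eps_s z)).
  apply: eq_bigr => a _.
  rewrite -/(sweedler _ (fun b1 b2 => F (a.1 * b1) (a.2 * b2))) delta_eps_s /=.
    by apply: eq_bigr => u _; rewrite mulrA.
  by multilinear (bilinear_rules Fb).
rewrite -(sweedler_mul1r (F := fun c e => F c (e * eps_s z)) y) //.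
by multilinear (bilinear_rules Fb).
Qed.

End HopfIdentities.

Section Coassociativity4.
Variable V : lmodType k.
Variable G : H -> H -> H -> H -> V.
Hypothesis Gq : quadrilinear_map G.

Lemma coassoc4_l h :
  \sum_(p <- delta h) \sum_(c <- delta p.1) \sum_(d <- delta p.2) G c.1 c.2 d.1 d.2 =
  \sum_(p <- delta h) \sum_(q <- delta p.1) \sum_(r <- delta q.2) G q.1 r.1 r.2 p.2.
Proof.
under eq_bigr do rewrite exchange_big /=.
rewrite -(coassoc_sum (G := fun y1 y2 y3 => \sum_(c <- delta y1) G c.1 c.2 y2 y3)).
  apply: eq_bigr => p _; rewrite (coassoc_sum (G := fun y1 y2 y3 => G y1 y2 y3 p.2)) //.
  by multilinear (quadrilinear_rules Gq).
split=> [y1|y2 y3]; first by multilinear (quadrilinear_rules Gq).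
apply: (sweedler_linear (F := fun c1 c2 => G c1 c2 y2 y3)).
by multilinear (quadrilinear_rules Gq).
Qed.

Lemma coassoc4_r h :
  \sum_(p <- delta h) \sum_(q <- delta p.2) \sum_(d <- delta q.2) G p.1 q.1 d.1 d.2 =
  \sum_(e <- delta h) \sum_(q <- delta e.1) \sum_(d <- delta e.2) G q.1 q.2 d.1 d.2.
Proof.
rewrite -(coassoc_sum (G := fun y1 y2 y3 => \sum_(d <- delta y3) G y1 y2 d.1 d.2)) //.
split=> [y1|y2 y3]; last by multilinear (quadrilinear_rules Gq).
split=> [y2|y3]; last by multilinear (quadrilinear_rules Gq).
apply: (sweedler_linear (F := fun c1 c2 => G y1 y2 c1 c2)).
by multilinear (quadrilinear_rules Gq).
Qed.
End Coassociativity4.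

Section Antipode.
Variable V : lmodType k.
Implicit Types (F : H -> H -> V).

Lemma delta_eps_t_expand F x : bilinear_map F -> sweedler (eps_t x) F =
  \sum_(p <- delta x) \sum_(c <- delta p.1) \sum_(d <- delta p.2)
    F (c.1 * S d.2) (c.2 * S d.1).
Proof.
move=> Fb.
rewrite (coassoc4_l (G := fun y1 y2 y3 y4 => F (y1 * S y4) (y2 * S y3))); last first.
  by multilinear (bilinear_rules Fb).
rewrite delta_eps_t //.
transitivity (\sum_(p <- delta x) \sum_(u <- delta 1) F (u.1 * p.1 * S p.2) u.2).
  rewrite exchange_big; apply: eq_bigr => u _; rewrite /eps_t mulr_sumr bilinear_map_suml //.
  by apply: eq_bigr => p _; rewrite mulrA.
apply: eq_bigr => p _; symmetry.
by apply: (coprod_eps_t_r (F := fun a c => F (a * S p.2) c)); multilinear (bilinear_rules Fb).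
Qed.

Lemma delta_mul_eps_t_expand F y x : bilinear_map F -> sweedler (y * eps_t x) F =
  \sum_(a <- delta y) \sum_(p <- delta x) \sum_(c <- delta p.1) \sum_(d <- delta p.2)
    F (a.1 * (c.1 * S d.2)) (a.2 * (c.2 * S d.1)).
Proof.
move=> Fb; rewrite sweedler_mul //; apply: eq_bigr => a _.
rewrite -/(sweedler _ (fun b1 b2 => F (a.1 * b1) (a.2 * b2))) delta_eps_t_expand //.
by multilinear (bilinear_rules Fb).
Qed.

Lemma delta_antipode_eps_t F h : bilinear_map F ->
  sweedler (S h) F = \sum_(p <- delta h) sweedler (S p.1 * eps_t p.2) F.
Proof.
move=> Fb; rewrite antipode_conv sweedler_sum //.
under eq_bigr do rewrite sweedler_sum //.
rewrite (coassoc_sum (G := fun y1 y2 y3 => sweedler (S y1 * y2 * S y3) F)); last first.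
  by multilinear (bilinear_rules Fb, fun x y => sweedlerD x y Fb, fun a x => sweedlerZ a x Fb).
apply: eq_bigr => p _; rewrite /eps_t mulr_sumr sweedler_sum //.
by apply: eq_bigr => r _; rewrite mulrA.
Qed.

Lemma delta_antipode_eps_s F h : bilinear_map F -> sweedler (S h) F =
  \sum_(e <- delta h) \sum_(d <- delta e.2)
    sweedler (eps_s e.1) (fun w1 w2 => F (w1 * S d.2) (w2 * S d.1)).
Proof.
move=> Fb.
have Fd y z : bilinear_map (fun w1 w2 => F (w1 * S z) (w2 * S y)).
  by multilinear (bilinear_rules Fb).
rewrite delta_antipode_eps_t //.
transitivity (\sum_(p <- delta h) \sum_(p' <- delta p.2) \sum_(d <- delta p'.2)
   sweedler (S p.1 * p'.1) (fun w1 w2 => F (w1 * S d.2) (w2 * S d.1))).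
  apply: eq_bigr => p _; rewrite delta_mul_eps_t_expand // exchange_big /=.
  apply: eq_bigr => p' _.
  under eq_bigr do rewrite exchange_big /=.
  rewrite exchange_big /=; apply: eq_bigr => d _.
  rewrite sweedler_mul //.
  by apply: eq_bigr => a _; apply: eq_bigr => c _; rewrite !mulrA.
rewrite (coassoc4_r (G := fun y1 y2 y3 y4 =>
           sweedler (S y1 * y2) (fun w1 w2 => F (w1 * S y4) (w2 * S y3)))).
  apply: eq_bigr => e _; rewrite exchange_big /=; apply: eq_bigr => d _.
  by rewrite /eps_s sweedler_sum.
split=> [y1|y2 y3 y4]; [split=> [y2|y3 y4]|];
  first by rewrite /sweedler; multilinear (bilinear_rules Fb).
all: by multilinear (fun y z x1 x2 => sweedlerD x1 x2 (Fd y z),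
                     fun y z a x => sweedlerZ a x (Fd y z)).
Qed.

Lemma delta_antipode F h : bilinear_map F -> sweedler (S h) F =
  \sum_(u <- delta 1) \sum_(p <- delta h) F (u.1 * S p.2) (u.2 * S p.1).
Proof.
move=> Fb; rewrite delta_antipode_eps_s //.
transitivity (\sum_(e <- delta h) \sum_(d <- delta e.2) \sum_(u <- delta 1)
   F (u.1 * S d.2) (u.2 * eps_s e.1 * S d.1)).
  apply: eq_bigr => e _; apply: eq_bigr => d _; rewrite delta_eps_s //.
  by multilinear (bilinear_rules Fb).
rewrite -(coassoc_sum (G := fun y1 y2 y3 =>
    \sum_(u <- delta 1) F (u.1 * S y3) (u.2 * eps_s y1 * S y2))); last first.
  by multilinear (bilinear_rules Fb, linear_funD eps_s_linear, linear_funZ eps_s_linear).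
rewrite [RHS]exchange_big /=; apply: eq_bigr => e _.
rewrite exchange_big /=; apply: eq_bigr => u _.
rewrite [in RHS](antipode_conv e.1) mulr_sumr bilinear_map_sumr //; apply: eq_bigr => f _.
by rewrite /eps_s -mulrA mulr_suml.
Qed.

Lemma delta_mul_antipode F x g : bilinear_map F -> sweedler (x * S g) F =
  \sum_(a <- delta x) \sum_(p <- delta g) F (a.1 * S p.2) (a.2 * S p.1).
Proof.
move=> Fb; rewrite sweedler_mul //.
transitivity (\sum_(a <- delta x) \sum_(u <- delta 1) \sum_(p <- delta g)
   F (a.1 * u.1 * S p.2) (a.2 * u.2 * S p.1)).
  apply: eq_bigr => a _.
  rewrite -/(sweedler _ (fun b1 b2 => F (a.1 * b1) (a.2 * b2))) delta_antipode /=.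
    by under eq_bigr do under eq_bigr do rewrite !mulrA.
  by multilinear (bilinear_rules Fb).
rewrite -(sweedler_mul1r (F := fun c e => \sum_(p <- delta g) F (c * S p.2) (e * S p.1)) x) //.
by multilinear (bilinear_rules Fb).
Qed.

Lemma delta_mul_antipode_eps_s F x g : bilinear_map F ->
  \sum_(p <- delta g) sweedler (x * S p.1) (fun w1 w2 => F (w1 * p.2) w2) =
  \sum_(a <- delta x) \sum_(p <- delta g) F (a.1 * eps_s p.2) (a.2 * S p.1).
Proof.
move=> Fb.
transitivity (\sum_(p <- delta g) \sum_(a <- delta x) \sum_(q <- delta p.1)
   F (a.1 * S q.2 * p.2) (a.2 * S q.1)).
  by apply: eq_bigr => p _; rewrite delta_mul_antipode //; multilinear (bilinear_rules Fb).
rewrite exchange_big; apply: eq_bigr => a _.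
rewrite (coassoc_sum (G := fun y1 y2 y3 => F (a.1 * S y2 * y3) (a.2 * S y1))); last first.
  by multilinear (bilinear_rules Fb).
apply: eq_bigr => p _; rewrite /eps_s mulr_sumr bilinear_map_suml //.
by apply: eq_bigr => r _; rewrite mulrA.
Qed.
End Antipode.

Section PartialModuleAlgebra.
Variables (A : algType k) (act : H -> A -> A).
Hypothesis HM : is_sym_partial_module_algebra delta act.

Let act_linl b : linear (act^~ b).
Proof. by case: HM => l _ a x y; apply: l. Qed.
Let act_linr h : linear (act h).
Proof. by case: HM => _ [l _]; apply: l. Qed.
Let act_mul h a b : act h (a * b) = sweedler h (fun x y => act x a * act y b).
Proof. by case: HM => _ [_ [m _]]; apply: m. Qed.
Let act1 b : act 1 b = b.
Proof. by case: HM => _ [_ [_ [u _]]]; apply: u. Qed.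
Let act_actl h g b : act h (act g b) = sweedler h (fun x y => act x 1 * act (y * g) b).
Proof. by case: HM => _ [_ [_ [_ [l _]]]]; apply: l. Qed.
Let act_actr h g b : act h (act g b) = sweedler h (fun x y => act (x * g) b * act y 1).
Proof. by case: HM => _ [_ [_ [_ [_ r]]]]; apply: r. Qed.

Lemma actDl x y b : act (x + y) b = act x b + act y b.
Proof. exact: linear_funD (act_linl b) x y. Qed.
Lemma actZl a x b : act (a *: x) b = a *: act x b.
Proof. exact: linear_funZ (act_linl b) a x. Qed.
Lemma actDr h b c : act h (b + c) = act h b + act h c.
Proof. exact: linear_funD (act_linr h) b c. Qed.
Lemma actZr h a b : act h (a *: b) = a *: act h b.
Proof. exact: linear_funZ (act_linr h) a b. Qed.
Lemma act_sumr h I (r : seq I) (F : I -> A) :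
  act h (\sum_(i <- r) F i) = \sum_(i <- r) act h (F i).
Proof. exact: (linear_fun_sum (act_linr h)). Qed.

Let act_rules := (actDl, actZl, actDr, actZr).

Lemma act_unit_factor h b : act h b = sweedler h (fun x y => act x 1 * act y b).
Proof. by rewrite -{1}[b]mul1r act_mul. Qed.

Lemma act_act1_mul z x c :
  act z (act x 1 * c) = sweedler z (fun z1 z2 => act (z1 * x) 1 * act z2 c).
Proof.
rewrite act_mul /sweedler; symmetry.
transitivity (\sum_(p <- delta z) \sum_(w <- delta p.2)
   act (p.1 * x) 1 * act w.1 1 * act w.2 c).
  apply: eq_bigr => p _; rewrite [act p.2 c]act_unit_factor mulr_sumr.
  by apply: eq_bigr => w _; rewrite mulrA.
rewrite -(coassoc_sum (G := fun y1 y2 y3 => act (y1 * x) 1 * act y2 1 * act y3 c)).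
  by apply: eq_bigr => p _; rewrite -mulr_suml (act_actr p.1 x 1).
by multilinear act_rules.
Qed.

Lemma act_eps_s_act z g b : act (eps_s z) (act g b) = act (eps_s z * g) b.
Proof.
rewrite act_actl delta_eps_s /=; last by multilinear act_rules.
by rewrite -[RHS]act1 act_actl /sweedler; apply: eq_bigr => u _; rewrite mulrA.
Qed.

Lemma act_mul_eps_s c z b :
  act (c * eps_s z) b = \sum_(a <- delta c) act a.1 1 * act (a.2 * eps_s z) b.
Proof. by rewrite act_unit_factor delta_mul_eps_s //; multilinear act_rules. Qed.

Lemma act_act_antipode_mul x g b :
  \sum_(q <- delta x) act q.1 (act (S q.2 * g) b) =
  \sum_(u <- delta 1) act (u.1 * x) 1 * act (u.2 * g) b.
Proof.
transitivity (\sum_(q <- delta x) \sum_(c <- delta q.1) act c.1 1 * act (c.2 * S q.2 * g) b).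
  by apply: eq_bigr => q _; rewrite act_actl /sweedler; apply: eq_bigr => c _; rewrite mulrA.
rewrite (coassoc_sum (G := fun y1 y2 y3 => act y1 1 * act (y2 * S y3 * g) b)); last first.
  by multilinear act_rules.
by rewrite (coprod_eps_t_r (F := fun a c => act a 1 * act (c * g) b)) //;
  multilinear act_rules.
Qed.

Lemma act_delta_antipode g b :
  \sum_(p <- delta g) act p.1 (act (S p.2) b) = act g 1 * b.
Proof.
under eq_bigr do rewrite -[S _]mulr1.
rewrite act_act_antipode_mul -[RHS]act1 act_act1_mul /sweedler.
by under eq_bigr do rewrite mulr1.
Qed.

Lemma act_mul_delta_antipode h g b :
  \sum_(p <- delta g) act (h * p.1) (act (S p.2) b) =
  sweedler h (fun z1 z2 => act (z1 * g) 1 * act z2 b).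
Proof.
rewrite (sweedler_mul1r (F := fun c e => act (c * g) 1 * act e b)); last first.
  by multilinear act_rules.
transitivity (\sum_(p <- delta g) \sum_(a <- delta h) \sum_(q <- delta p.1)
   act (a.1 * q.1) 1 * act (a.2 * q.2 * S p.2) b).
  by apply: eq_bigr => p _; rewrite act_actl sweedler_mul //; multilinear act_rules.
rewrite exchange_big /=; apply: eq_bigr => a _.
rewrite (coassoc_sum (G := fun y1 y2 y3 => act (a.1 * y1) 1 * act (a.2 * y2 * S y3) b));
  last by multilinear act_rules.
transitivity (\sum_(p <- delta g) \sum_(q <- delta p.2)
   act (a.1 * p.1) 1 * act (a.2 * (q.1 * S q.2)) b).
  by apply: eq_bigr => p _; apply: eq_bigr => q _; rewrite mulrA.
rewrite (coprod_eps_t_r (F := fun c e => act (a.1 * c) 1 * act (a.2 * e) b)).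
  by apply: eq_bigr => u _; rewrite !mulrA.
by multilinear act_rules.
Qed.

Lemma act_mul_antipode_act x g y b :
  \sum_(p <- delta g) act (x * S p.1) (act (p.2 * y) b) =
  \sum_(a <- delta x) \sum_(p <- delta g) act (a.1 * eps_s p.2 * y) b * act (a.2 * S p.1) 1.
Proof.
transitivity (\sum_(p <- delta g)
   sweedler (x * S p.1) (fun w1 w2 => act (w1 * p.2 * y) b * act w2 1)).
  by apply: eq_bigr => p _; rewrite act_actr /sweedler; apply: eq_bigr => w _; rewrite mulrA.
by rewrite (delta_mul_antipode_eps_s (F := fun w z => act (w * y) b * act z 1)) //;
  multilinear act_rules.
Qed.

Lemma act1_mul_act_delta1 x g b :
  act x 1 * act g b = \sum_(u <- delta 1) act u.1 (act x 1) * act (u.2 * g) b.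
Proof.
rewrite -[LHS]act1 act_mul /sweedler.
transitivity (\sum_(u <- delta 1) \sum_(w <- delta u.2)
   act u.1 (act x 1) * act w.1 1 * act (w.2 * g) b).
  apply: eq_bigr => u _; rewrite [act u.2 _]act_actl /sweedler mulr_sumr.
  by apply: eq_bigr => w _; rewrite mulrA.
rewrite -(coassoc_sum (G := fun y1 y2 y3 => act y1 (act x 1) * act y2 1 * act (y3 * g) b)).
  apply: eq_bigr => u _; rewrite -mulr_suml; congr (_ * _).
  by rewrite -[in RHS](mulr1 (act x 1)) act_mul.
by multilinear act_rules.
Qed.

Lemma delta1_act_global x c g b :
  \sum_(u <- delta 1) act u.1 (act x c) * act (u.2 * g) b =
  \sum_(u <- delta 1) act (u.1 * x) c * act (u.2 * g) b.
Proof.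
rewrite -/(sweedler 1 (fun y z => act y (act x c) * act (z * g) b)) delta1_eps_s; last first.
  by multilinear act_rules.
under eq_bigr do rewrite act_eps_s_act.
by rewrite -(delta1_eps_s (F := fun y z => act (y * x) c * act (z * g) b)) //;
  multilinear act_rules.
Qed.

Lemma act_PR2 h g b :
  \sum_(p <- delta g) act h (act p.1 (act (S p.2) b)) =
  \sum_(p <- delta g) act (h * p.1) (act (S p.2) b).
Proof. by rewrite -act_sumr act_delta_antipode act_act1_mul act_mul_delta_antipode. Qed.

Lemma act_PR3 h g b :
  \sum_(p <- delta g) act h (act (S p.1) (act p.2 b)) =
  \sum_(p <- delta g) act (h * S p.1) (act p.2 b).
Proof.
(* Padding with [* 1] puts both sides in the shape of [act_mul_antipode_act]. *)
under eq_bigr => p _ do rewrite -[p.2]mulr1.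
under [RHS]eq_bigr => p _ do rewrite -[p.2]mulr1.
rewrite act_mul_antipode_act.
transitivity (\sum_(c <- delta h) act c.1 1 *
                \sum_(p <- delta g) act (c.2 * S p.1) (act (p.2 * 1) b)).
  under eq_bigr do rewrite act_actl.
  by rewrite /sweedler exchange_big /=; apply: eq_bigr => c _; rewrite mulr_sumr.
under eq_bigr do rewrite act_mul_antipode_act mulr_sumr.
under eq_bigr do under eq_bigr do rewrite mulr_sumr.
rewrite -(coassoc_sum (G := fun y1 y2 y3 => \sum_(p <- delta g)
   act y1 1 * (act (y2 * eps_s p.2 * 1) b * act (y3 * S p.1) 1))); last first.
  by multilinear (act_rules, linear_funD eps_s_linear, linear_funZ eps_s_linear).
apply: eq_bigr => c _; rewrite exchange_big /=; apply: eq_bigr => p _.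
under eq_bigr do rewrite mulrA mulr1.
by rewrite -mulr_suml mulr1 act_mul_eps_s.
Qed.

Lemma act_PR4 h g b :
  \sum_(p <- delta h) act p.1 (act (S p.2) (act g b)) =
  \sum_(p <- delta h) act p.1 (act (S p.2 * g) b).
Proof.
by rewrite act_delta_antipode act_act_antipode_mul act1_mul_act_delta1 delta1_act_global.
Qed.

Lemma act_PR5 h g b :
  \sum_(p <- delta h) act (S p.1) (act p.2 (act g b)) =
  \sum_(p <- delta h) act (S p.1) (act (p.2 * g) b).
Proof.
under eq_bigr => p _ do rewrite -[S p.1]mul1r -[p.2]mulr1.
under [RHS]eq_bigr => p _ do rewrite -[S p.1]mul1r.
rewrite !act_mul_antipode_act exchange_big [RHS]exchange_big /=; apply: eq_bigr => p _.
transitivity (\sum_(u <- delta 1) \sum_(a <- delta u.1)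
   act a.1 1 * act (a.2 * eps_s p.2 * g) b * act (u.2 * S p.1) 1).
  apply: eq_bigr => u _; rewrite mulr1 act_actl delta_mul_eps_s ?mulr_suml //.
  by multilinear act_rules.
rewrite (delta2_unit_r (G := fun y1 y2 y3 =>
   act y1 1 * act (y2 * eps_s p.2 * g) b * act (y3 * S p.1) 1)); last first.
  by multilinear act_rules.
rewrite exchange_big /=; apply: eq_bigr => v _; rewrite -mulr_suml; congr (_ * _).
by rewrite -[RHS]act1 act_actl /sweedler; apply: eq_bigr => q _; rewrite !mulrA.
Qed.

Lemma act_PR6 h b :
  act h b = \sum_(p <- delta3l delta h) act p.1.1 (act (S p.1.2) (act p.2 b)).
Proof.
rewrite (sum_delta3l (fun x y z => act x (act (S y) (act z b)))) [LHS]act_unit_factor.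
by apply: eq_bigr => p _; rewrite act_delta_antipode.
Qed.

End PartialModuleAlgebra.
End WeakHopfAlgebra.

Theorem proposition3p5 (k : fieldType) (H : algType k)
    (delta : H -> seq (H * H)) (eps : H -> k) (S : H -> H)
    (A : algType k) (act : H -> A -> A) :
  is_weak_hopf delta eps S ->
  is_sym_partial_module_algebra delta act ->
  is_partial_rep_End delta S (fun h a => act h a).
Proof.
move=> HW HM; have [act_linl [act_linr [_ [act1 _]]]] := HM.
split; first exact: act_linr.
split; first exact: act_linl.
split; first exact: act1.
split; first by move=> *; apply: (act_PR2 HW HM).
split; first by move=> *; apply: (act_PR3 HW HM).
split; first by move=> *; apply: (act_PR4 HW HM).
split; first by move=> *; apply: (act_PR5 HW HM).
by move=> *; apply: (act_PR6 HW HM).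
Qed.
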